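(* Let $\mathbf i,\mathbf i'\in I^{(\infty)}$ be related by a 4-move $\mathbf i'=\eta_k\mathbf i$ for some $k\in\mathbb N$. Then $$\widetilde B^{\mathbf i'}=\sigma_{k+2}\sigma_k\,\mu_k\mu_{k+1}\mu_k\,\widetilde B^{\mathbf i},$$ i.e. applying to $\widetilde B^{\mathbf i}$ the mutations in directions $k$, then $k+1$, then $k$, and then the permutations $\sigma_k$ and $\sigma_{k+2}$, yields $\widetilde B^{\mathbf i'}$.
   Context: Let $\mathfrak g$ be a complex finite-dimensional simple Lie algebra with index set $I$, Cartan matrix $\mathsf C=(\mathsf c_{i,j})_{i,j\in I}$, simple roots $\alpha_i$, fundamental weights $\varpi_i$, Weyl group $W$ generated by simple reflections $s_i$, and $W$-invariant symmetric bilinear form $(\cdot,\cdot)$ on the weight lattice with $(\alpha_i,\alpha_j)=\mathsf d_i\mathsf c_{i,j}$, where $\mathrm{diag}(\mathsf d_i)$ is the minimal positive integral left symmetrizer of $\mathsf C$. Write $\mathbb N=\{1,2,\dots\}$, $[a]_+=\max(a,0)$. $I^{(\infty)}$ is the set of sequences $\mathbf i=(i_u)_{u\in\mathbb N}\in I^{\mathbb N}$ in which every element of $I$ occurs infinitely often. For $u\in\mathbb N$: $u^+=u^+_{\mathbf i}=\min\{v>u:i_v=i_u\}$, $u^-=u^-_{\mathbf i}=\max(\{v<u:i_v=i_u\}\cup\{0\})$, $w_u=w^{\mathbf i}_u=s_{i_1}\cdots s_{i_u}$. The exchange matrix $\widetilde B^{\mathbf i}=(b_{u,v})_{u,v\in\mathbb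 N}$: $b_{u,v}=1$ if $v=u^+$; $-1$ if $v=u^-$; $\mathsf c_{i_u,i_v}$ if $u<v<u^+<v^+$; $-\mathsf c_{i_u,i_v}$ if $v<u<v^+<u^+$; $0$ otherwise. The skew-symmetric matrix $\Lambda^{\mathbf i}$: $\Lambda_{u,v}=-\Lambda_{v,u}=(\varpi_{i_u}-w_u\varpi_{i_u},\varpi_{i_v}+w_v\varpi_{i_v})$ for $u\le v$. Mutation: for $k\in\mathbb N$, $\mu_k(\Lambda,\widetilde B)=(E^T\Lambda E,E\widetilde BF)$ where, with $\widetilde B=(b_{u,v})$, $e_{u,v}=\delta_{u,v}$ ($v\neq k$), $e_{k,k}=-1$, $e_{u,k}=[-b_{u,k}]_+$ ($u\ne k$); $f_{u,v}=\delta_{u,v}$ ($u\ne k$), $f_{k,k}=-1$, $f_{k,v}=[b_{k,v}]_+$ ($v\ne k$). For a permutation $\pi$ of $\mathbb N$, $(\pi\Lambda)_{u,v}=\Lambda_{\pi^{-1}(u),\pi^{-1}(v)}$, $(\pi\widetilde B)_{u,v}=b_{\pi^{-1}(u),\pi^{-1}(v)}$; $\sigma_k$ is the transposition of $k$ and $k+1$. Composites of operators act right to left, each mutation using the exchange matrix produced by the previous steps. A 4-move: $\mathbf i'=\eta_k\mathbf i$ means $i_k=i_{k+2}=i'_{k+1}=i'_{k+3}$, $i_{k+1}=i_{k+3}=i'_k=i'_{k+2}$, $i_u=i'_u$ for $u\notin[k,k+3]$, and $\mathsf c_{i_{k+1},i_k}\mathsf c_{i_k,i_{k+1}}=2$.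 *)

From mathcomp Require Import all_boot all_order all_algebra.
Set Implicit Arguments. Unset Strict Implicit. Unset Printing Implicit Defensive.
Import Order.TTheory GRing.Theory Num.Theory.
Local Open Scope ring_scope.

(* Cartan matrices of complex finite-dimensional simple Lie algebras:  *)
(* indecomposable symmetrizable generalized Cartan matrices whose      *)
(* symmetrization is positive definite (finite type), index set I a    *)
(* nonempty finite type.                                               *)
Definition simple_cartan (I : finType) (C : I -> I -> int) : Prop :=
  [/\ #|I| != 0%N, (forall i, C i i = 2) /\
      (forall i j, i != j -> C i j <= 0),
      (forall i j, C i j = 0 <-> C j i = 0),
      (forall J : {set I}, J != set0 -> J != setT ->
          exists j k, [/\ j \in J, k \notin J & C j k != 0])
    & exists d : I -> int,
        [/\ (forall i, 0 < d i),
            (forall i j, d i * C i j = d j * C j i)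
          & forall x : I -> rat, (exists i, x i != 0) ->
              0 < \sum_i \sum_j x i * (d i * C i j)%:~R * x j]].

(* I^(infty): sequences indexed by N = {1,2,...} (the value at 0 is     *)
(* irrelevant) in which every element of I occurs infinitely often.    *)
Record seqinf (I : finType) := SeqInf {
  sq :> nat -> I;
  sq_inf : forall (a : I) (n : nat), exists v, (n < v)%N /\ sq v = a }.

Lemma uplus_ex (I : finType) (i : seqinf I) (u : nat) :
  exists v, (u < v)%N && (i v == i u).
Proof.
case: (sq_inf i (i u) u) => v [h1 h2]; exists v; by rewrite h1 h2 eqxx.
Qed.

Definition uplus (I : finType) (i : seqinf I) (u : nat) : nat :=
  ex_minn (uplus_ex i u).

(* u^- = max ({v < u : i_v = i_u} U {0}) ; v = 0 contributes 0 *)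
Definition uminus (I : finType) (i : seqinf I) (u : nat) : nat :=
  (\max_(v < u | i v == i u) (v : nat))%N.

Definition Bmat (I : finType) (C : I -> I -> int) (i : seqinf I)
  (u v : nat) : int :=
  if v == uplus i u then 1
  else if v == uminus i u then -1
  else if [&& (u < v)%N, (v < uplus i u)%N & (uplus i u < uplus i v)%N]
    then C (i u) (i v)
  else if [&& (v < u)%N, (u < uplus i v)%N & (uplus i v < uplus i u)%N]
    then - C (i u) (i v)
  else 0.

Definition mutE (k : nat) (B : nat -> nat -> int) (u x : nat) : int :=
  if x != k then (u == x)%:Z
  else if u == k then -1 else Num.max 0 (- B u k).

Definition mutF (k : nat) (B : nat -> nat -> int) (y v : nat) : int :=
  if y != k then (y == v)%:Z
  else if v == k then -1 else Num.max 0 (B k v).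

(* (E B F)_{u,v} = sum_{x,y in N} e_{u,x} b_{x,y} f_{y,v}.  Since
   e_{u,x} = 0 unless x in {u,k} and f_{y,v} = 0 unless y in {v,k},
   all nonzero terms have x <= max(u,k) and y <= max(v,k), so the
   truncated sum below is exactly the infinite matrix product. *)
Definition mut (k : nat) (B : nat -> nat -> int) (u v : nat) : int :=
  \sum_(1 <= x < (maxn u k).+1) \sum_(1 <= y < (maxn v k).+1)
     mutE k B u x * B x y * mutF k B y v.

Definition transp (k u : nat) : nat :=
  if u == k then k.+1 else if u == k.+1 then k else u.

(* (pi B)_{u,v} = b_{pi^{-1} u, pi^{-1} v} with pi = sigma_k *)
Definition permB (k : nat) (B : nat -> nat -> int) (u v : nat) : int :=
  B (transp k u) (transp k v).

Definition four_move (I : finType) (C : I -> I -> int) (k : nat)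
  (i i' : nat -> I) : Prop :=
  [/\ i k = i k.+2 /\ i k.+2 = i' k.+1 /\ i' k.+1 = i' k.+3,
      i k.+1 = i k.+3 /\ i k.+3 = i' k /\ i' k = i' k.+2,
      (forall u, (u < k)%N || (k.+3 < u)%N -> i u = i' u)
    & C (i k.+1) (i k) * C (i k) (i k.+1) = 2].

(* Write pi = sigma_k sigma_(k+2).  Then i' = i o pi, and pi carries the
   successor map of i to that of i' (it never reverses two positions carrying
   the same letter), so B^i' conjugated by pi is the exchange matrix of i for
   the order "pi u < pi v".  An index x is touched if x or x^+ lies in
   [k, k+3]; the row and column of an untouched index meet rows and columns
   k, k+1 only in zeros, so the mutations leave them alone, and the entries
   there see no pair of positions whose order pi reverses.
   The entries between touched indices depend only on whether k^- < (k+1)^-,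
   whether (k+2)^+ < (k+3)^+, and on the Cartan pair
   (c_(i_k, i_(k+1)), c_(i_(k+1), i_k)), which is (-1,-2) or (-2,-1); they are
   checked by computation on an eight-point model. *)

From mathcomp Require Import all_boot all_order all_algebra zify ring.
Set Implicit Arguments. Unset Strict Implicit. Unset Printing Implicit Defensive.
Import Order.TTheory GRing.Theory Num.Theory.
Local Open Scope ring_scope.

(** * Successors and predecessors in a word *)

Section Successor.
Variables (I : finType) (i : seqinf I).

Lemma uplusP u : [/\ (u < uplus i u)%N, i (uplus i u) = i u &
  forall w, (u < w)%N -> i w = i u -> (uplus i u <= w)%N].
Proof.
rewrite /uplus; case: ex_minnP => m /andP[lt_um /eqP eq_m] min_m.
by split=> // w lt_uw eq_w; apply: min_m; rewrite lt_uw eq_w eqxx.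
Qed.

Lemma ltn_uplus u : (u < uplus i u)%N. Proof. by case: (uplusP u). Qed.

Lemma sq_uplus u : i (uplus i u) = i u. Proof. by case: (uplusP u). Qed.

Lemma sq_neq_lt_uplus u w : (u < w)%N -> (w < uplus i u)%N -> i w != i u.
Proof.
move=> lt_uw lt_w_up; apply/eqP => eq_w.
by case: (uplusP u) => _ _ /(_ w lt_uw eq_w); rewrite leqNgt lt_w_up.
Qed.

Lemma uplus_first u w : (u < w)%N -> i w = i u ->
  (forall z, (u < z)%N -> (z < w)%N -> i z != i u) -> uplus i u = w.
Proof.
move=> lt_uw eq_w none_between.
case: (uplusP u) => lt_u_up eq_up /(_ w lt_uw eq_w).
rewrite leq_eqVlt => /orP[/eqP // | lt_up_w].
by move: (none_between _ lt_u_up lt_up_w); rewrite eq_up eqxx.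
Qed.

Lemma uplus_inj : injective (uplus i).
Proof.
move=> u v eq_up; have eq_uv : i u = i v by rewrite -sq_uplus eq_up sq_uplus.
case: (ltngtP u v) => // [lt_uv | lt_vu].
- by move: (sq_neq_lt_uplus lt_uv); rewrite eq_up ltn_uplus eq_uv eqxx => /(_ isT).
- by move: (sq_neq_lt_uplus lt_vu); rewrite -eq_up ltn_uplus eq_uv eqxx => /(_ isT).
Qed.

Lemma uminus_leq_pred u : (uminus i u <= u.-1)%N.
Proof. by apply/bigmax_leqP => z _; have := ltn_ord z; lia. Qed.

Lemma leq_uminus u z : (z < u)%N -> i z = i u -> (z <= uminus i u)%N.
Proof.
move=> lt_zu eq_z.
by apply: (leq_bigmax_cond (Ordinal lt_zu)); rewrite /= eq_z eqxx.
Qed.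

Lemma sq_uminus u : (1 <= uminus i u)%N -> i (uminus i u) = i u.
Proof.
rewrite /uminus; case: (pickP [pred z : 'I_u | i z == i u]) => [z0 hz0 _ | empty].
  have nonempty : (0 < #|[pred z : 'I_u | i z == i u]|)%N.
    by apply/card_gt0P; exists z0.
  by have [z /eqP eq_z ->] := eq_bigmax_cond (fun z : 'I_u => z : nat) nonempty.
by rewrite big_pred0.
Qed.

Lemma uminus_eq_uplus u v : (1 <= v)%N -> (v == uminus i u) = (u == uplus i v).
Proof.
move=> v_gt0; apply/eqP/eqP => [ev | eu]; subst.
  have lt_u : (uminus i u < u)%N by have := uminus_leq_pred u; lia.
  apply/esym/uplus_first => [//||z lt_mz lt_zu]; first by rewrite sq_uminus.
  by rewrite sq_uminus //; apply/negP => /eqP /(leq_uminus lt_zu); lia.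
apply/eqP; rewrite eqn_leq leq_uminus ?ltn_uplus ?sq_uplus // leqNgt.
apply/negP => lt_v_m; have m_gt0 : (1 <= uminus i (uplus i v))%N by lia.
have lt_m_up : (uminus i (uplus i v) < uplus i v)%N.
  by have := uminus_leq_pred (uplus i v); lia.
by move: (sq_neq_lt_uplus lt_v_m lt_m_up); rewrite sq_uminus // sq_uplus eqxx.
Qed.

End Successor.

(** * Mutation *)

Lemma sum_nat_delta n a (G : nat -> int) : (1 <= a < n)%N ->
  \sum_(1 <= x < n) (x == a)%:Z * G x = G a.
Proof.
move=> a_in; rewrite (eq_bigr (fun x => if x == a then G x else 0)) => [|x _].
  by rewrite -big_mkcond big_nat1_eq a_in.
by case: eqP; rewrite ?mul1r ?mul0r.
Qed.

(* Entrywise form of [E B F]; the [b_kk] terms are kept since [B] need not be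
   skew-symmetric. *)
Definition mut_entry (k : nat) (B : nat -> nat -> int) (u v : nat) : int :=
  if u == k then (if v == k then B k k else - B k v - B k k * Num.max 0 (B k v))
  else if v == k then - B u k - Num.max 0 (- B u k) * B k k
  else B u v + B u k * Num.max 0 (B k v) + Num.max 0 (- B u k) * B k v
       + Num.max 0 (- B u k) * B k k * Num.max 0 (B k v).

Lemma mutE_delta k B u x : mutE k B u x =
  (x == u)%:Z * (u != k)%:Z +
  (x == k)%:Z * (if u == k then -1 else Num.max 0 (- B u k)).
Proof.
rewrite /mutE; case: (eqVneq x k) => [-> | ne_xk] /=.
  by rewrite (eq_sym k u); case: eqP; rewrite ?mul0r ?mul1r ?add0r.
by rewrite mul0r addr0 (eq_sym x u); case: eqP => [-> | _]; rewrite ?ne_xk ?mul0r.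
Qed.

Lemma mutF_delta k B y v : mutF k B y v =
  (y == v)%:Z * (v != k)%:Z +
  (y == k)%:Z * (if v == k then -1 else Num.max 0 (B k v)).
Proof.
rewrite /mutF; case: (eqVneq y k) => [-> | ne_yk] /=.
  by rewrite (eq_sym k v); case: eqP; rewrite ?mul0r ?mul1r ?add0r.
by rewrite mul0r addr0; case: eqP => [<- | _]; rewrite ?ne_yk ?mul0r.
Qed.

Lemma mut_entryE k B u v : (1 <= k)%N -> (1 <= u)%N -> (1 <= v)%N ->
  mut k B u v = mut_entry k B u v.
Proof.
move=> k_gt0 u_gt0 v_gt0.
pose f := if v == k then -1 else Num.max 0 (B k v).
pose G x := (v != k)%:Z * B x v + f * B x k.
have sum_row x : \sum_(1 <= y < (maxn v k).+1) mutE k B u x * B x y * mutF k B y v =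
    mutE k B u x * G x.
  under eq_bigr => y _ do rewrite mutF_delta -/f mulrDr !mulrA
    [_ * (y == v)%:Z]mulrC [_ * (y == k)%:Z]mulrC -!mulrA.
  by rewrite big_split /= !sum_nat_delta; [rewrite /G; ring | lia | lia].
rewrite /mut; under eq_bigr => x _ do rewrite sum_row mutE_delta mulrDl -!mulrA.
rewrite big_split /= !sum_nat_delta; try lia.
rewrite /mut_entry /G /f; case: (eqVneq u k) => [-> | ne_uk];
  case: (eqVneq v k) => [-> | ne_vk] /=; ring.
Qed.

Lemma eq_mut_entry k X Y u v : X u v = Y u v -> X u k = Y u k -> X k v = Y k v ->
  X k k = Y k k -> mut_entry k X u v = mut_entry k Y u v.
Proof. by move=> XYuv XYuk XYkv XYkk; rewrite /mut_entry XYuv XYuk XYkv XYkk. Qed.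

Lemma mut3_entryE k B u v : (1 <= k)%N -> (1 <= u)%N -> (1 <= v)%N ->
  mut k (mut k.+1 (mut k B)) u v =
  mut_entry k (mut_entry k.+1 (mut_entry k B)) u v.
Proof.
move=> k_gt0 u_gt0 v_gt0.
have mut1 a b : (1 <= a)%N -> (1 <= b)%N -> mut k B a b = mut_entry k B a b.
  exact: mut_entryE.
have mut2 a b : (1 <= a)%N -> (1 <= b)%N ->
    mut k.+1 (mut k B) a b = mut_entry k.+1 (mut_entry k B) a b.
  by move=> a_gt0 b_gt0; rewrite mut_entryE //; apply: eq_mut_entry; apply: mut1.
by rewrite mut_entryE //; apply: eq_mut_entry; apply: mut2.
Qed.

Lemma mut_entry_row0 k X u v : u != k -> X u k = 0 -> mut_entry k X u v = X u v.
Proof.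
move=> ne_uk Xuk0; rewrite /mut_entry (negbTE ne_uk) Xuk0 oppr0 maxxx.
by case: eqP => [-> | _]; rewrite ?Xuk0; ring.
Qed.

Lemma mut_entry_col0 k X u v : v != k -> X k v = 0 -> mut_entry k X u v = X u v.
Proof.
move=> ne_vk Xkv0; rewrite /mut_entry (negbTE ne_vk) Xkv0 maxxx.
by case: eqP => [-> | _]; rewrite ?Xkv0; ring.
Qed.

Lemma mut_entry3_row0 k X u v : u != k -> u != k.+1 -> X u k = 0 -> X u k.+1 = 0 ->
  mut_entry k (mut_entry k.+1 (mut_entry k X)) u v = X u v.
Proof.
move=> ne_uk ne_uk1 Xuk0 Xuk10.
have row1 w : mut_entry k X u w = X u w by exact: mut_entry_row0.
have row2 w : mut_entry k.+1 (mut_entry k X) u w = X u w.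
  by rewrite mut_entry_row0 ?row1.
by rewrite mut_entry_row0 ?row2.
Qed.

Lemma mut_entry3_col0 k X u v : v != k -> v != k.+1 -> X k v = 0 -> X k.+1 v = 0 ->
  mut_entry k (mut_entry k.+1 (mut_entry k X)) u v = X u v.
Proof.
move=> ne_vk ne_vk1 Xkv0 Xk1v0.
have col1 w : mut_entry k X w v = X w v by exact: mut_entry_col0.
have col2 w : mut_entry k.+1 (mut_entry k X) w v = X w v.
  by rewrite mut_entry_col0 ?col1.
by rewrite mut_entry_col0 ?col2.
Qed.

Lemma mut_entry_reindex (f : nat -> nat) (D : pred nat) k X Y :
  D k -> {in D, forall z, (f z == f k) = (z == k)} ->
  {in D &, forall z w, X (f z) (f w) = Y z w} ->
  {in D &, forall z w, mut_entry (f k) X (f z) (f w) = mut_entry k Y z w}.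
Proof. by move=> Dk fk XY z w Dz Dw; rewrite /mut_entry !fk // !XY. Qed.

(** * Exchange matrices and reindexing *)

(* [Bmat] with order, successor map and coefficients as parameters, and with
   [v == u^-] replaced by [u == v^+] (see [Bmat_exch]), so that it can be
   transported along reindexings. *)
Definition exch (lt : rel nat) (up : nat -> nat) (c : nat -> nat -> int)
    (x y : nat) : int :=
  if y == up x then 1 else if x == up y then -1
  else if [&& lt x y, lt y (up x) & lt (up x) (up y)] then c x y
  else if [&& lt y x, lt x (up y) & lt (up y) (up x)] then - c x y else 0.

Lemma Bmat_exch (I : finType) (C : I -> I -> int) (i : seqinf I) x y :
  (1 <= y)%N ->
  Bmat C i x y = exch ltn (uplus i) (fun a b => C (i a) (i b)) x y.
Proof. by move=> y_gt0; rewrite /Bmat /exch uminus_eq_uplus. Qed.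

Lemma exch_transport lt1 up1 c1 lt2 up2 c2 (f : nat -> nat) x y :
  let S := [:: x; y; up2 x; up2 y] in
  {in S &, forall z w, lt1 (f z) (f w) = lt2 z w} ->
  {in S &, forall z w, (f z == f w) = (z == w)} ->
  f (up2 x) = up1 (f x) -> f (up2 y) = up1 (f y) -> c1 (f x) (f y) = c2 x y ->
  exch lt1 up1 c1 (f x) (f y) = exch lt2 up2 c2 x y.
Proof.
move=> S flt feq fx fy fc; rewrite /exch -fx -fy fc.
by rewrite !feq ?flt // !inE eqxx ?orbT.
Qed.

Lemma uplus_transport (I : finType) (i j : seqinf I) (f : nat -> nat) :
  involutive f -> (forall z, j z = i (f z)) ->
  (forall x y, (x < y)%N -> i x = i y -> (f x < f y)%N) ->
  forall u, uplus j (f u) = f (uplus i u).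
Proof.
move=> fK jE f_mono u; have jfu : j (f u) = i u by rewrite jE fK.
apply: uplus_first => [||z lt_z lt_z_up].
- by apply: f_mono; [apply: ltn_uplus | rewrite sq_uplus].
- by rewrite jE fK sq_uplus jfu.
apply/negP; rewrite jE jfu => /eqP eq_fz.
case: (ltngtP (f z) u) => [lt_fz_u | lt_u_fz | eq_fz_u].
- by move: (f_mono _ _ lt_fz_u eq_fz); rewrite fK; lia.
- case: (ltngtP (f z) (uplus i u)) => [lt_fz_up | lt_up_fz | eq_fz_up].
  + by move: (sq_neq_lt_uplus lt_u_fz lt_fz_up); rewrite eq_fz eqxx.
  + by move: (f_mono _ _ lt_up_fz); rewrite sq_uplus -eq_fz fK => /(_ erefl); lia.
  + by move: lt_z_up; rewrite -eq_fz_up fK ltnn.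
- by move: lt_z; rewrite -eq_fz_u fK ltnn.
Qed.

(** * The permutation [sigma_k sigma_(k+2)] *)

Definition swap_pairs (k x : nat) : nat := transp k (transp k.+2 x).

Definition swapped (k z w : nat) : bool :=
  [|| (z == k) && (w == k.+1), (z == k.+1) && (w == k),
      (z == k.+2) && (w == k.+3) | (z == k.+3) && (w == k.+2)].

Lemma swap_pairsP k x :
  (x = k /\ swap_pairs k x = k.+1) \/ (x = k.+1 /\ swap_pairs k x = k) \/
  (x = k.+2 /\ swap_pairs k x = k.+3) \/ (x = k.+3 /\ swap_pairs k x = k.+2) \/
  ((x < k \/ k.+3 < x)%N /\ swap_pairs k x = x).
Proof.
rewrite /swap_pairs [transp k.+2 x]/transp.
by case: ifPn => /eqP ?; [|case: ifPn => /eqP ?]; rewrite /transp;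
  repeat case: ifPn => /eqP ?; lia.
Qed.

Lemma swap_pairsK k : involutive (swap_pairs k).
Proof.
by move=> x; have := swap_pairsP k x; have := swap_pairsP k (swap_pairs k x); lia.
Qed.

Lemma ltn_swap_pairs k z w : ~~ swapped k z w ->
  (swap_pairs k z < swap_pairs k w)%N = (z < w)%N.
Proof.
by rewrite /swapped => ?; have := swap_pairsP k z; have := swap_pairsP k w; lia.
Qed.

Lemma permB_swap_pairs k (M : nat -> nat -> int) x y :
  permB k.+2 (permB k M) (swap_pairs k x) (swap_pairs k y) = M x y.
Proof. by rewrite -[in RHS](swap_pairsK k x) -[in RHS](swap_pairsK k y). Qed.

Lemma swapped_window k z w : swapped k z w ->
  (k <= z <= k.+3)%N && (k <= w <= k.+3)%N.
Proof. by rewrite /swapped; lia. Qed.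

Lemma four_move_sq (I : finType) (C : I -> I -> int) k (i i' : nat -> I) :
  four_move C k i i' -> forall z, i' z = i (swap_pairs k z).
Proof.
case=> [[e0 [e2 e2']] [e1 [e3 e3']] eq_out _] z.
case: (swap_pairsP k z) => [[-> ->] | [[-> ->] | [[-> ->] | [[-> ->] | [out ->]]]]].
- by rewrite e1 e3.
- by rewrite e0 e2.
- by rewrite e3 e3'.
- by rewrite e2 e2'.
- by rewrite eq_out //; lia.
Qed.

(** * The eight-point model *)

(* Model of the window [k^-, (k+1)^-, k, k+1, k+2, k+3, (k+2)^+, (k+3)^+] on
   the points [0, ..., 7]: [pq] and [rs] record whether [k^- < (k+1)^-] and
   [(k+2)^+ < (k+3)^+], the only comparisons not forced by the 4-move; even
   points carry the letter [i_k], odd points [i_(k+1)]. *)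
Definition mpos (pq rs : bool) (z : nat) : nat :=
  match z with
  | 0 => if pq then 0 else 1 | 1 => if pq then 1 else 0
  | 2 => 2 | 3 => 3 | 4 => 4 | 5 => 5
  | 6 => if rs then 6 else 7 | _ => if rs then 7 else 6 end%N.

Definition mlt pq rs : rel nat := fun z w => (mpos pq rs z < mpos pq rs w)%N.

Definition mswap (z : nat) : nat :=
  match z with 2 => 3 | 3 => 2 | 4 => 5 | 5 => 4 | _ => z end%N.

Definition mlt_swap pq rs : rel nat := fun z w => mlt pq rs (mswap z) (mswap w).

Definition mup (z : nat) : nat :=
  match z with 0 => 2 | 1 => 3 | 2 => 4 | 3 => 5 | 4 => 6 | 5 => 7 | _ => 0 end%N.

Definition mcartan (c1 c2 : int) (z w : nat) : int :=
  if odd z == odd w then 2 else if odd z then c2 else c1.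

Definition model_check (pq rs : bool) (c1 c2 : int) : bool :=
  all (fun a => all (fun b =>
    mut_entry 2 (mut_entry 3 (mut_entry 2 (exch (mlt pq rs) mup (mcartan c1 c2)))) a b
    == exch (mlt_swap pq rs) mup (mcartan c1 c2) a b) (iota 0 6)) (iota 0 6).

Lemma model_identity pq rs c1 c2 a b :
  (c1 = -1 /\ c2 = -2) \/ (c1 = -2 /\ c2 = -1) -> (a < 6)%N -> (b < 6)%N ->
  mut_entry 2 (mut_entry 3 (mut_entry 2 (exch (mlt pq rs) mup (mcartan c1 c2)))) a b
  = exch (mlt_swap pq rs) mup (mcartan c1 c2) a b.
Proof.
move=> c12 a_lt6 b_lt6; have : model_check pq rs c1 c2.
  by case: c12 => [[-> ->] | [-> ->]]; case: pq; case: rs; vm_compute.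
move=> /allP /(_ a) /[!mem_iota] /(_ a_lt6) /allP /(_ b) /[!mem_iota] /(_ b_lt6).
exact/eqP.
Qed.

(** * The 4-move *)

Lemma cartan_pair (c1 c2 : int) : c1 <= 0 -> c2 <= 0 -> c1 * c2 = 2 ->
  (c1 = -1 /\ c2 = -2) \/ (c1 = -2 /\ c2 = -1).
Proof.
move=> c1_le0 c2_le0 prod.
have c1_neg : c1 <= -1 by case: (c1 =P 0) prod => [-> | ]; [rewrite mul0r | ]; lia.
have c2_neg : c2 <= -1 by case: (c2 =P 0) prod => [-> | ]; [rewrite mulr0 | ]; lia.
nia.
Qed.

Section FourMove.
Variables (I : finType) (C : I -> I -> int) (i i' : seqinf I) (k : nat).
Hypotheses (k_gt0 : (1 <= k)%N) (C_diag : forall a, C a a = 2).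
Hypothesis cartan_k : (C (i k) (i k.+1) = -1 /\ C (i k.+1) (i k) = -2) \/
                      (C (i k) (i k.+1) = -2 /\ C (i k.+1) (i k) = -1).
Hypotheses (sq_k2 : i k.+2 = i k) (sq_k3 : i k.+3 = i k.+1).
Hypothesis sq'E : forall z, i' z = i (swap_pairs k z).

Local Notation cR := (fun a b => C (i a) (i b)).
Local Notation swap := (swap_pairs k).

Lemma sq_k_neq : i k != i k.+1.
Proof.
by apply/eqP => eq_k; case: cartan_k => [[+ _] | [+ _]]; rewrite eq_k C_diag.
Qed.

Lemma swapped_sq_neq z w : swapped k z w -> i z != i w.
Proof.
rewrite /swapped => /or4P[] /andP[/eqP-> /eqP->];
  by rewrite ?sq_k2 ?sq_k3 ?sq_k_neq // eq_sym sq_k_neq.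
Qed.

Lemma ltn_swap_sq x y : (x < y)%N -> i x = i y -> (swap x < swap y)%N.
Proof.
move=> lt_xy eq_xy; rewrite ltn_swap_pairs //.
by apply/negP => /swapped_sq_neq; rewrite eq_xy eqxx.
Qed.

Lemma Bmat_swap x y : (1 <= y)%N ->
  Bmat C i' (swap x) (swap y) =
  exch (fun a b => swap a < swap b)%N (uplus i) cR x y.
Proof.
have uplus_swap u : uplus i' (swap u) = swap (uplus i u).
  exact: uplus_transport (swap_pairsK k) sq'E ltn_swap_sq u.
move=> y_gt0; rewrite Bmat_exch; last by have := swap_pairsP k y; lia.
apply: exch_transport; rewrite ?uplus_swap ?sq'E ?swap_pairsK //.
by move=> z w _ _; rewrite (can_eq (swap_pairsK k)).
Qed.

Lemma uplus_k : uplus i k = k.+2.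
Proof.
apply: uplus_first => // z lt_kz lt_z; have -> : z = k.+1 by lia.
by rewrite eq_sym sq_k_neq.
Qed.

Lemma uplus_k1 : uplus i k.+1 = k.+3.
Proof.
apply: uplus_first => // z lt_kz lt_z; have -> : z = k.+2 by lia.
by rewrite sq_k2 sq_k_neq.
Qed.

Definition prev0 := uminus i k.
Definition prev1 := uminus i k.+1.
Definition next2 := uplus i k.+2.
Definition next3 := uplus i k.+3.

Lemma uplus_prev0 : (1 <= prev0)%N -> uplus i prev0 = k.
Proof. by move=> ?; apply/esym/eqP; rewrite -uminus_eq_uplus. Qed.

Lemma uplus_prev1 : (1 <= prev1)%N -> uplus i prev1 = k.+1.
Proof. by move=> ?; apply/esym/eqP; rewrite -uminus_eq_uplus. Qed.

Lemma sq_prev0 : (1 <= prev0)%N -> i prev0 = i k.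
Proof. exact: sq_uminus. Qed.

Lemma sq_prev1 : (1 <= prev1)%N -> i prev1 = i k.+1.
Proof. exact: sq_uminus. Qed.

Lemma sq_next2 : i next2 = i k.
Proof. by rewrite sq_uplus sq_k2. Qed.

Lemma sq_next3 : i next3 = i k.+1.
Proof. by rewrite sq_uplus sq_k3. Qed.

Lemma prev0_lt : (prev0 < k)%N.
Proof. by have := uminus_leq_pred i k; rewrite -/prev0; lia. Qed.

Lemma prev1_lt : (prev1 < k)%N.
Proof.
have := uminus_leq_pred i k.+1; rewrite -/prev1 leq_eqVlt => /orP[/eqP eq_k|] //.
by have := uplus_prev1; rewrite eq_k uplus_k => /(_ k_gt0); lia.
Qed.

Lemma next2_gt : (k.+3 < next2)%N.
Proof.
have := ltn_uplus i k.+2; rewrite -/next2 leq_eqVlt => /orP[/eqP eq_k|] //.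
by move: sq_next2; rewrite -eq_k sq_k3 => /eqP; rewrite eq_sym (negbTE sq_k_neq).
Qed.

Lemma next3_gt : (k.+3 < next3)%N.
Proof. exact: ltn_uplus. Qed.

Lemma next2_neq3 : next2 != next3.
Proof. by apply/eqP => /uplus_inj; lia. Qed.

Lemma prev0_neq1 : (1 <= prev0)%N -> prev0 != prev1.
Proof.
move=> prev0_gt0; apply/eqP => eq_p; have prev1_gt0 : (1 <= prev1)%N by rewrite -eq_p.
move: (sq_prev0 prev0_gt0) (sq_prev1 prev1_gt0) sq_k_neq.
by rewrite eq_p => -> ->; rewrite eqxx.
Qed.

Definition window (z : nat) : nat :=
  match z with 0 => prev0 | 1 => prev1 | 2 => k | 3 => k.+1 | 4 => k.+2
  | 5 => k.+3 | 6 => next2 | _ => next3 end%N.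

(* [k^-] or [(k+1)^-] is [0], i.e. absent, when [k] or [k+1] is the first
   occurrence of its letter. *)
Definition window_valid (z : nat) : bool :=
  (z < 8)%N && ((2 <= z)%N || (1 <= window z)%N).

Local Notation valid := window_valid.
Local Notation mltk := (mlt (prev0 < prev1)%N (next2 < next3)%N).
Local Notation mcartank := (mcartan (C (i k) (i k.+1)) (C (i k.+1) (i k))).

Lemma ltn_window z w : valid z -> valid w -> (window z < window w)%N = mltk z w.
Proof.
have := prev0_lt; have := prev1_lt; have := next2_gt; have := next3_gt.
have := next2_neq3; have := prev0_neq1; rewrite /valid /mlt.
case: z => [|[|[|[|[|[|[|[|z]]]]]]]] //; case: w => [|[|[|[|[|[|[|[|w]]]]]]]] //=;
  case: (ltnP prev0 prev1) => ?; case: (ltnP next2 next3) => ?; lia.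
Qed.

Lemma eq_window z w : valid z -> valid w -> (window z == window w) = (z == w).
Proof.
have := prev0_lt; have := prev1_lt; have := next2_gt; have := next3_gt.
have := next2_neq3; have := prev0_neq1; rewrite /valid.
by case: z => [|[|[|[|[|[|[|[|z]]]]]]]] //; case: w => [|[|[|[|[|[|[|[|w]]]]]]]] //=;
  lia.
Qed.

Lemma window_mup z : (z < 6)%N -> valid z -> window (mup z) = uplus i (window z).
Proof.
rewrite /valid; case: z => [|[|[|[|[|[|z]]]]]] //= _ valid_z.
all: by rewrite ?uplus_prev0 ?uplus_prev1 ?uplus_k ?uplus_k1.
Qed.

Lemma sq_window z : valid z -> i (window z) = if odd z then i k.+1 else i k.
Proof.
rewrite /valid; case: z => [|[|[|[|[|[|[|[|z]]]]]]]] //= valid_z.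
all: by rewrite ?sq_prev0 ?sq_prev1 ?sq_k2 ?sq_k3 ?sq_next2 ?sq_next3.
Qed.

Lemma cartan_window z w : valid z -> valid w ->
  C (i (window z)) (i (window w)) = mcartank z w.
Proof.
move=> vz vw; rewrite /mcartan !sq_window //.
by case: (odd z); case: (odd w); rewrite ?C_diag.
Qed.

Lemma swap_window z : (z < 8)%N -> swap (window z) = window (mswap z).
Proof.
have := prev0_lt; have := prev1_lt; have := next2_gt; have := next3_gt.
case: z => [|[|[|[|[|[|[|[|z]]]]]]]] //= *.
all: by match goal with |- swap ?x = _ => have := swap_pairsP k x end; lia.
Qed.

Lemma valid_mswap z : valid z -> valid (mswap z).
Proof. by rewrite /valid; case: z => [|[|[|[|[|[|z]]]]]]. Qed.

Lemma valid_mup z : (z < 6)%N -> valid (mup z).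
Proof.
have := next2_gt; have := next3_gt.
by rewrite /valid; case: z => [|[|[|[|[|[|z]]]]]] //= *; lia.
Qed.

Lemma valid_transport_set a b z : (a < 6)%N -> (b < 6)%N -> valid a -> valid b ->
  z \in [:: a; b; mup a; mup b] -> valid z.
Proof. by move=> ? ? ? ?; rewrite !inE => /or4P[] /eqP->; rewrite ?valid_mup. Qed.

Lemma Bmat_window a b : (a < 6)%N -> (b < 6)%N -> valid a -> valid b ->
  Bmat C i (window a) (window b) = exch mltk mup mcartank a b.
Proof.
move=> a_lt6 b_lt6 va vb; rewrite Bmat_exch; last first.
  by move: b_lt6 vb; rewrite /valid; case: b => [|[|[|[|[|[|b]]]]]] //= *; lia.
have vS := valid_transport_set a_lt6 b_lt6 va vb.
apply: exch_transport; rewrite ?window_mup ?cartan_window //.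
- move=> z w /vS vz /vS vw; exact: ltn_window.
- by move=> z w /vS vz /vS vw; rewrite eq_window.
Qed.

Lemma exch_swap_window a b : (a < 6)%N -> (b < 6)%N -> valid a -> valid b ->
  exch (fun z w => swap z < swap w)%N (uplus i) cR (window a) (window b) =
  exch (mlt_swap (prev0 < prev1)%N (next2 < next3)%N) mup mcartank a b.
Proof.
move=> a_lt6 b_lt6 va vb; have vS := valid_transport_set a_lt6 b_lt6 va vb.
apply: exch_transport; rewrite ?window_mup ?cartan_window //.
- move=> z w /vS vz /vS vw; have /andP[z_lt8 _] := vz; have /andP[w_lt8 _] := vw.
  by rewrite !swap_window // ltn_window ?valid_mswap.
- by move=> z w /vS vz /vS vw; rewrite eq_window.
Qed.

Lemma mut3_window a b : (a < 6)%N -> (b < 6)%N -> valid a -> valid b ->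
  mut_entry k (mut_entry k.+1 (mut_entry k (Bmat C i))) (window a) (window b) =
  mut_entry 2 (mut_entry 3 (mut_entry 2 (exch mltk mup mcartank))) a b.
Proof.
pose D z := (z < 6)%N && valid z.
have D2 : D 2%N by rewrite /D /valid.
have D3 : D 3%N by rewrite /D /valid.
have eq_window_D m : D m -> {in D, forall z, (window z == window m) = (z == m)}.
  by move=> /andP[_ vm] z /andP[_ vz]; rewrite eq_window.
have mut0 : {in D &, forall z w,
    Bmat C i (window z) (window w) = exch mltk mup mcartank z w}.
  by move=> z w /andP[? ?] /andP[? ?]; rewrite Bmat_window.
have mut1 := mut_entry_reindex D2 (eq_window_D _ D2) mut0.
have mut2 := mut_entry_reindex D3 (eq_window_D _ D3) mut1.
have mut3 := mut_entry_reindex D2 (eq_window_D _ D2) mut2.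
by move=> ? ? ? ?; apply: mut3; apply/andP.
Qed.

(* Equivalently, for [x >= 1]: [x] or [x^+] lies in [[k, k+3]]. *)
Definition touched (x : nat) : bool :=
  [|| x == prev0, x == prev1 | (k <= x <= k.+3)%N].

Lemma touched_uplus x : (1 <= x)%N -> (k <= uplus i x <= k.+3)%N -> touched x.
Proof.
move=> x_gt0 up_x; rewrite /touched /prev0 /prev1 !uminus_eq_uplus //.
have [e|[e|[e|e]]] : uplus i x = k \/ uplus i x = k.+1 \/
                     uplus i x = k.+2 \/ uplus i x = k.+3 by lia.
- by rewrite e eqxx.
- by rewrite e eqxx orbT.
- have -> : x = k by apply: (uplus_inj (i := i)); rewrite e uplus_k.
  by apply/or3P/Or33; lia.
- have -> : x = k.+1 by apply: (uplus_inj (i := i)); rewrite e uplus_k1.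
  by apply/or3P/Or33; lia.
Qed.

Lemma untouched x : (1 <= x)%N -> ~~ touched x ->
  ~~ (k <= x <= k.+3)%N /\ ~~ (k <= uplus i x <= k.+3)%N.
Proof.
move=> x_gt0 out; split; apply/negP => in_k; move/negP: out; apply.
  by rewrite /touched in_k !orbT.
exact: touched_uplus.
Qed.

Lemma Bmat_untouched x : (1 <= x)%N -> ~~ touched x ->
  [/\ Bmat C i x k = 0, Bmat C i x k.+1 = 0, Bmat C i k x = 0 & Bmat C i k.+1 x = 0].
Proof.
move=> x_gt0 out; have [xW upxW] := untouched x_gt0 out.
by rewrite !Bmat_exch // /exch uplus_k uplus_k1; split; repeat case: ifPn => ?; lia.
Qed.

Lemma mut3_untouched x y : (1 <= x)%N -> (1 <= y)%N -> ~~ touched x || ~~ touched y ->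
  mut_entry k (mut_entry k.+1 (mut_entry k (Bmat C i))) x y = Bmat C i x y.
Proof.
have ne_k z : ~~ touched z -> z != k /\ z != k.+1.
  by move=> out; split; apply: contraNneq out => ->; rewrite /touched; lia.
move=> x_gt0 y_gt0 /orP[out | out]; have [ne_zk ne_zk1] := ne_k _ out.
- by have [? ? _ _] := Bmat_untouched x_gt0 out; apply: mut_entry3_row0.
- by have [_ _ ? ?] := Bmat_untouched y_gt0 out; apply: mut_entry3_col0.
Qed.

Lemma exch_swap_untouched x y :
  (1 <= x)%N -> (1 <= y)%N -> ~~ touched x || ~~ touched y ->
  exch (fun z w => swap z < swap w)%N (uplus i) cR x y = exch ltn (uplus i) cR x y.
Proof.
move=> x_gt0 y_gt0 out.
have [c same_c] : exists c, forall t, t \in [:: x; y; uplus i x; uplus i y] ->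
    (k <= t <= k.+3)%N -> i t = c.
  case/orP: out => [/(untouched x_gt0) [xW upxW] | /(untouched y_gt0) [yW upyW]].
  - exists (i y) => t; rewrite !inE => /or4P[]/eqP-> tW;
      by move: xW upxW; rewrite ?tW ?sq_uplus.
  - exists (i x) => t; rewrite !inE => /or4P[]/eqP-> tW;
      by move: yW upyW; rewrite ?tW ?sq_uplus.
apply: (@exch_transport _ _ _ _ _ _ id) => //= z w zS wS.
rewrite ltn_swap_pairs //; apply/negP => sw; case/andP: (swapped_window sw) => zW wW.
by move: (swapped_sq_neq sw); rewrite (same_c z) ?(same_c w) ?eqxx.
Qed.

Lemma touched_window x : (1 <= x)%N -> touched x ->
  exists a, [/\ (a < 6)%N, valid a & x = window a].
Proof.
move=> x_gt0; rewrite /touched => /or3P[/eqP ex | /eqP ex | x_k].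
- by exists 0%N; split; rewrite // /valid /= -ex.
- by exists 1%N; split; rewrite // /valid /= -ex.
- have [->|[->|[->|->]]] : x = k \/ x = k.+1 \/ x = k.+2 \/ x = k.+3 by lia.
  + by exists 2%N.
  + by exists 3%N.
  + by exists 4%N.
  + by exists 5%N.
Qed.

Lemma Bmat_four_move u v : (1 <= u)%N -> (1 <= v)%N ->
  Bmat C i' u v = permB k.+2 (permB k (mut k (mut k.+1 (mut k (Bmat C i))))) u v.
Proof.
have swap_gt0 z : (1 <= z)%N -> (1 <= swap z)%N by have := swap_pairsP k z; lia.
move=> /swap_gt0 x_gt0 /swap_gt0 y_gt0.
rewrite -(swap_pairsK k u) -(swap_pairsK k v) permB_swap_pairs.
move: (swap u) (swap v) x_gt0 y_gt0 => x y x_gt0 y_gt0.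
rewrite Bmat_swap // mut3_entryE //.
case: (boolP (touched x && touched y)) => [/andP[tx ty] | out].
- have [a [a_lt6 va ->]] := touched_window x_gt0 tx.
  have [b [b_lt6 vb ->]] := touched_window y_gt0 ty.
  by rewrite exch_swap_window // mut3_window // model_identity.
- rewrite negb_and in out.
  by rewrite exch_swap_untouched // mut3_untouched // Bmat_exch.
Qed.

End FourMove.

Theorem lemma3p4 (I : finType) (C : I -> I -> int) (i i' : seqinf I) (k : nat) :
  simple_cartan C ->
  (1 <= k)%N ->
  four_move C k i i' ->
  forall u v : nat, (1 <= u)%N -> (1 <= v)%N ->
    Bmat C i' u v =
    permB k.+2 (permB k (mut k (mut k.+1 (mut k (Bmat C i))))) u v.
Proof.
move=> [_ [C_diag C_off] _ _ _] k_gt0 hmove.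
have [[eq_k2 _] [eq_k3 _] _ prod] := hmove.
have ne_k : i k != i k.+1 by apply/eqP => eq_k; move: prod; rewrite -eq_k C_diag.
have cartan_k : (C (i k) (i k.+1) = -1 /\ C (i k.+1) (i k) = -2) \/
                (C (i k) (i k.+1) = -2 /\ C (i k.+1) (i k) = -1).
  by apply: cartan_pair; rewrite 1?mulrC ?C_off // eq_sym.
exact: Bmat_four_move k_gt0 C_diag cartan_k (esym eq_k2) (esym eq_k3)
  (four_move_sq hmove).
Qed.
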